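(* Let $h_1,h_2$ be half-spaces of a finite dimensional CAT(0) cube complex with $h_1\subsetneq h_2^*$. Then $\beta(h_1,h_2)$ is consistent (i.e. $\beta\cap\beta^*=\varnothing$, and $h\in\beta$, $h\subset k$ imply $k\in\beta$) and satisfies the descending chain condition (every descending chain in $\beta(h_1,h_2)$ is eventually constant).
   Context: $X$ is a finite-dimensional CAT(0) cube complex identified with its vertex set, $\mathfrak H$ its set of half-spaces, $h^*=X\setminus h$, $\mathfrak s^*=\{h^*:h\in\mathfrak s\}$. Half-spaces $h,k$ are transverse ($h\pitchfork k$) if $h\cap k,h\cap k^*,h^*\cap k,h^*\cap k^*$ are all nonempty. Write $\hat a\subset b$ if $a\subsetneq b$ or $a^*\subsetneq b$. For $h_1\subsetneq h_2^*$, $\beta(h_1,h_2)$ is the set of $h\in\mathfrak H$ satisfying one of: (1) $\hat h_1\subset h$ and $h\pitchfork h_2$; (2) $\hat h_2\subset h$ and $h\pitchfork h_1$; (3) $\hat h_1\subset h$ and $\hat h_2\subset h$. *)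

(* A CAT(0) cube complex X is identified with its vertex set;
   its 1-skeleton is a (connected) median graph, and conversely every median
   graph is the 1-skeleton of a unique CAT(0) cube complex (Chepoi, Roller).
   We therefore model X as a median graph (V, adj).  Half-spaces are vertex
   sets: the half-space of the hyperplane dual to an edge uv containing u is
   { x | d(x,u) < d(x,v) }. *)
From Stdlib Require Import Arith List.
Import ListNotations.

Definition vset (V : Type) := V -> Prop.

Section Cube.
Context {V : Type} (adj : V -> V -> Prop).

Inductive walk : V -> V -> nat -> Prop :=
| walk_nil x : walk x x 0
| walk_cons x y z n : adj x y -> walk y z n -> walk x z (S n).

Definition dist (x y : V) (n : nat) : Prop :=
  walk x y n /\ forall m, walk x y m -> n <= m.

Definition interval (x y m : V) : Prop :=
  exists a b, dist x m a /\ dist m y b /\ dist x y (a + b).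

Definition median_graph : Prop :=
  (forall x y, adj x y -> adj y x) /\
  (forall x, ~ adj x x) /\
  (forall x y, exists n, walk x y n) /\
  (forall x y z, exists m, (interval x y m /\ interval y z m /\ interval x z m) /\
     forall m', interval x y m' /\ interval y z m' /\ interval x z m' -> m' = m).


Definition compl (h : vset V) : vset V := fun x => ~ h x.
Definition subset (a b : vset V) : Prop := forall x, a x -> b x.
Definition ssubset (a b : vset V) : Prop := subset a b /\ ~ subset b a.
Definition seteq (a b : vset V) : Prop := forall x, a x <-> b x.
Definition nonempty (a : vset V) : Prop := exists x, a x.

Definition halfspace (h : vset V) : Prop :=
  exists u v, adj u v /\
    forall x, h x <-> exists du dv, dist x u du /\ dist x v dv /\ du < dv.

Definition transverse (h k : vset V) : Prop :=
  nonempty (fun x => h x /\ k x) /\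
  nonempty (fun x => h x /\ compl k x) /\
  nonempty (fun x => compl h x /\ k x) /\
  nonempty (fun x => compl h x /\ compl k x).

(* finite dimension: bounded size of families of pairwise transverse
   half-spaces (= bounded dimension of cubes) *)
Definition finite_dimensional : Prop :=
  exists N, forall s : list (vset V),
    (forall h, In h s -> halfspace h) -> ForallOrdPairs transverse s ->
    length s <= N.

Definition hat_sub (a b : vset V) : Prop := ssubset a b \/ ssubset (compl a) b.

Definition beta (h1 h2 : vset V) (h : vset V) : Prop :=
  halfspace h /\
  ((hat_sub h1 h /\ transverse h h2) \/
   (hat_sub h2 h /\ transverse h h1) \/
   (hat_sub h1 h /\ hat_sub h2 h)).

Definition consistent (b : vset V -> Prop) : Prop :=
  (forall h, b h -> ~ b (compl h)) /\
  (forall h k, b h -> halfspace k -> subset h k -> b k).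

Definition dcc (b : vset V -> Prop) : Prop :=
  forall f : nat -> vset V, (forall n, b (f n)) ->
    (forall n, subset (f (S n)) (f n)) ->
    exists N, forall n, N <= n -> seteq (f n) (f N).
End Cube.

From Stdlib Require Import Arith List Lia Classical ClassicalEpsilon.
Import ListNotations.

(* Every member of β(h1,h2) contains all of h1, h1*, h2 or h2*, and "ĥi ⊂ h or
   h ⋔ hi" is preserved when h grows; consistency follows from these two facts.
   For the chain condition, a descending chain in β has a vertex x common to all
   its members and misses some vertex y.  In a median graph a half-space is
   determined by any edge leaving it, so along a geodesic from x to y the chain
   can only take as many values as the path has edges. *)

Lemma ex_least_nat (P : nat -> Prop) :
  (exists n, P n) -> exists n, P n /\ forall m, P m -> n <= m.
Proof.
  intros [n Hn]. induction n as [n IH] using lt_wf_ind.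
  destruct (classic (exists m, m < n /\ P m)) as [[m [Hmn Hm]] | Hnone].
  - exact (IH m Hmn Hm).
  - exists n. split; [exact Hn|]. intros m Hm.
    destruct (le_lt_dec n m); [assumption|]. exfalso; eauto.
Qed.

Lemma chain_antitone {V : Type} (f : nat -> vset V) :
  (forall n, subset (f (S n)) (f n)) -> forall m n, m <= n -> subset (f n) (f m).
Proof.
  intros Hdec m n Hmn. induction Hmn as [|n _ IH]; intros x Hx; auto.
  exact (IH x (Hdec n x Hx)).
Qed.

Section MedianGraph.
Variables (V : Type) (adj : V -> V -> Prop).

Lemma walk_cat x y z n m : walk adj x y n -> walk adj y z m -> walk adj x z (n + m).
Proof. induction 1; intros; simpl; [assumption|]. econstructor; eauto. Qed.

Definition gdist (x y : V) : nat := epsilon (inhabits 0) (dist adj x y).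

Hypothesis HX : median_graph adj.

Lemma adj_sym x y : adj x y -> adj y x.
Proof. apply HX. Qed.

Lemma adj_irrefl x : ~ adj x x.
Proof. apply HX. Qed.

Lemma walk_rev x y n : walk adj x y n -> walk adj y x n.
Proof.
  induction 1 as [|x y z n Hxy _ IH]; [constructor|].
  rewrite <- Nat.add_1_r. apply walk_cat with y; [assumption|].
  econstructor; [apply adj_sym; eassumption | constructor].
Qed.

Lemma gdist_spec x y : dist adj x y (gdist x y).
Proof. unfold gdist. apply epsilon_spec, ex_least_nat. apply HX. Qed.

Lemma gdist_le_walk x y n : walk adj x y n -> gdist x y <= n.
Proof. apply gdist_spec. Qed.

Lemma walk_gdist x y : walk adj x y (gdist x y).
Proof. apply gdist_spec. Qed.

Lemma gdist_of_dist x y n : dist adj x y n -> gdist x y = n.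
Proof.
  intros [Hw Hmin]. specialize (Hmin _ (walk_gdist x y)).
  pose proof (gdist_le_walk _ _ _ Hw). lia.
Qed.

Lemma gdist_triangle x y z : gdist x z <= gdist x y + gdist y z.
Proof. apply gdist_le_walk, walk_cat with y; apply walk_gdist. Qed.

Lemma gdist_sym x y : gdist x y = gdist y x.
Proof.
  pose proof (gdist_le_walk _ _ _ (walk_rev _ _ _ (walk_gdist x y))).
  pose proof (gdist_le_walk _ _ _ (walk_rev _ _ _ (walk_gdist y x))). lia.
Qed.

Lemma gdist_eq0 x y : gdist x y = 0 -> x = y.
Proof.
  intros H. pose proof (walk_gdist x y) as W. rewrite H in W.
  inversion W; reflexivity.
Qed.

Lemma gdist_refl x : gdist x x = 0.
Proof. pose proof (gdist_le_walk _ _ _ (walk_nil adj x)). lia. Qed.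

Lemma gdist_succ x y n : gdist x y = S n -> exists z, adj x z /\ walk adj z y n.
Proof.
  intros H. pose proof (walk_gdist x y) as W. rewrite H in W.
  inversion W; subst; eauto.
Qed.

Lemma gdist_adj x y : adj x y -> gdist x y = 1.
Proof.
  intros Hxy.
  assert (gdist x y <= 1) by (apply gdist_le_walk; econstructor; [eassumption | constructor]).
  destruct (gdist x y) eqn:E; [|lia].
  apply gdist_eq0 in E; subst. contradiction (adj_irrefl y).
Qed.

Lemma adj_of_gdist1 x y : gdist x y = 1 -> adj x y.
Proof.
  intros H. destruct (gdist_succ _ _ _ H) as [z [Hxz W]].
  inversion W; subst; assumption.
Qed.

Lemma gdist_step x y n : gdist x y = S n -> exists z, adj x z /\ gdist z y = n.
Proof.
  intros H. destruct (gdist_succ _ _ _ H) as [z [Hxz W]]. exists z. split; [assumption|].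
  pose proof (gdist_le_walk _ _ _ W). pose proof (gdist_triangle x z y).
  pose proof (gdist_adj _ _ Hxz). lia.
Qed.

Lemma interval_iff x y m : interval adj x y m <-> gdist x m + gdist m y = gdist x y.
Proof.
  split.
  - intros (a & b & Ha & Hb & Hab).
    apply gdist_of_dist in Ha, Hb, Hab. lia.
  - intros H. exists (gdist x m), (gdist m y).
    rewrite H. repeat split; apply gdist_spec.
Qed.

Definition is_median (x y z m : V) : Prop :=
  gdist x m + gdist m y = gdist x y /\
  gdist y m + gdist m z = gdist y z /\
  gdist x m + gdist m z = gdist x z.

Lemma median_exists x y z : exists m, is_median x y z m.
Proof.
  destruct (proj2 (proj2 (proj2 HX)) x y z) as [m [Hm _]].
  exists m. unfold is_median. rewrite <- !interval_iff. exact Hm.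
Qed.

Lemma median_unique x y z m m' : is_median x y z m -> is_median x y z m' -> m = m'.
Proof.
  destruct (proj2 (proj2 (proj2 HX)) x y z) as [c [_ Hc]].
  unfold is_median. rewrite <- !interval_iff.
  intros Hm Hm'. rewrite (Hc m Hm), (Hc m' Hm'). reflexivity.
Qed.

Lemma gdist_adj_succ x y z : adj x y ->
  gdist z y = S (gdist z x) \/ gdist z x = S (gdist z y).
Proof.
  intros Hxy. destruct (median_exists x y z) as [m (Hxym & Hyz & Hxz)].
  rewrite (gdist_adj _ _ Hxy) in Hxym.
  rewrite (gdist_sym z x), (gdist_sym z y).
  destruct (gdist x m) eqn:Hxm.
  - apply gdist_eq0 in Hxm; subst m.
    rewrite gdist_sym, gdist_adj in Hyz by assumption. lia.
  - assert (Hmy : gdist m y = 0) by lia.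
    apply gdist_eq0 in Hmy; subst m.
    rewrite gdist_refl in Hyz. lia.
Qed.

Lemma no_triangle p r q : adj p r -> adj r q -> ~ adj p q.
Proof.
  intros Hpr Hrq Hpq. destruct (gdist_adj_succ _ _ r Hpq);
    rewrite (gdist_sym r p), gdist_adj, gdist_adj in *; auto; lia.
Qed.

Lemma gdist_common_neighbour p r q : adj p r -> adj r q -> p <> q -> gdist p q = 2.
Proof.
  intros Hpr Hrq Hpq. pose proof (gdist_triangle p r q).
  rewrite (gdist_adj _ _ Hpr), (gdist_adj _ _ Hrq) in H.
  destruct (gdist p q) as [|[|[|]]] eqn:E; try lia.
  - apply gdist_eq0 in E. contradiction.
  - apply adj_of_gdist1 in E. contradiction (no_triangle p r q).
Qed.

Lemma quadrangle w a b c k :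
  gdist w a = k -> gdist w b = k -> gdist w c = S k -> adj a c -> adj b c -> a <> b ->
  exists e, adj a e /\ adj b e /\ S (gdist w e) = k.
Proof.
  intros Ha Hb Hc Hac Hbc Hab. destruct (median_exists w a b) as [m (Hwa & Hab_m & Hwb)].
  assert (Dab : gdist a b = 2)
    by (apply gdist_common_neighbour with c; auto using adj_sym).
  rewrite (gdist_sym a m) in Hab_m.
  assert (Hma : gdist m a = 1) by lia. assert (Hmb : gdist m b = 1) by lia.
  exists m. repeat split; [apply adj_sym, adj_of_gdist1; assumption .. | lia].
Qed.

(* In a 4-cycle a a' b' b, the edges a'b' and ab cut the graph the same way:
   otherwise the quadrangle condition yields a vertex c for which a' and b are
   two distinct medians of a, b', c. *)
Lemma square_side a a' b' b :
  adj a a' -> adj a' b' -> adj b' b -> adj b a -> a <> b' -> a' <> b ->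
  forall y, gdist y a' < gdist y b' -> gdist y a < gdist y b.
Proof.
  intros H1 H2 H3 H4 N1 N2 y Hy.
  destruct (le_lt_dec (gdist y b) (gdist y a)) as [Hc|Hc]; [exfalso|exact Hc].
  pose proof (gdist_adj_succ _ _ y H1). pose proof (gdist_adj_succ _ _ y H2).
  pose proof (gdist_adj_succ _ _ y H3). pose proof (gdist_adj_succ _ _ y H4).
  destruct (quadrangle y a' b a (gdist y a')) as [c [Ha'c [Hbc Hyc]]];
    auto using adj_sym; try lia.
  assert (Nac : a <> c) by (intros ->; lia).
  assert (Nb'c : b' <> c) by (intros ->; lia).
  assert (Dab' : gdist a b' = 2) by (apply gdist_common_neighbour with a'; auto).
  assert (Dac : gdist a c = 2) by (apply gdist_common_neighbour with a'; auto).
  assert (Db'c : gdist b' c = 2)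
    by (apply gdist_common_neighbour with a'; auto using adj_sym).
  assert (Ma' : is_median a b' c a').
  { unfold is_median. rewrite Dab', Dac, Db'c.
    rewrite (gdist_adj a a'), (gdist_adj a' b'), (gdist_adj b' a'), (gdist_adj a' c);
      auto using adj_sym. }
  assert (Mb : is_median a b' c b).
  { unfold is_median. rewrite Dab', Dac, Db'c.
    rewrite (gdist_adj a b), (gdist_adj b b'), (gdist_adj b' b), (gdist_adj b c);
      auto using adj_sym. }
  exact (N2 (median_unique _ _ _ _ _ Ma' Mb)).
Qed.

(* Induction on k walks the edge ab towards uv through a ladder of squares. *)
Lemma parallel_edges_side k : forall u v a b, adj u v -> adj a b ->
  gdist a u = k -> gdist b v = k -> gdist a v = S k -> gdist b u = S k ->
  forall y, gdist y u < gdist y v -> gdist y a < gdist y b.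
Proof.
  induction k as [|k IH]; intros u v a b Huv Hab Hau Hbv Hav Hbu y Hy.
  - apply gdist_eq0 in Hau, Hbv. subst. exact Hy.
  - destruct (gdist_step _ _ _ Hau) as [a' [Haa' Ha'u]].
    assert (Ha'v : gdist a' v = S k).
    { pose proof (gdist_triangle a' u v). pose proof (gdist_triangle a a' v).
      rewrite (gdist_adj _ _ Huv) in *. rewrite (gdist_adj _ _ Haa') in *. lia. }
    assert (Na'b : a' <> b) by (intros ->; lia).
    destruct (quadrangle v a' b a (S k)) as [b' [Ha'b' [Hbb' Hb'v]]];
      try (rewrite gdist_sym; assumption); auto using adj_sym.
    assert (Hb'u : gdist b' u = S k).
    { pose proof (gdist_triangle b b' u). pose proof (gdist_triangle b' a' u).
      rewrite (gdist_adj _ _ Hbb') in *. rewrite (gdist_adj _ _ (adj_sym _ _ Ha'b')) in *.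
      lia. }
    rewrite gdist_sym in Hb'v. injection Hb'v as Hb'v.
    apply (square_side a a' b' b); auto using adj_sym; [intros ->; lia|].
    apply (IH u v a' b'); auto.
Qed.

Lemma halfspace_gdist h u v :
  (forall x, h x <-> exists du dv, dist adj x u du /\ dist adj x v dv /\ du < dv) ->
  forall x, h x <-> gdist x u < gdist x v.
Proof.
  intros Hh x. rewrite Hh. split.
  - intros (du & dv & Hu & Hv & Hlt). apply gdist_of_dist in Hu, Hv. lia.
  - intros Hlt. exists (gdist x u), (gdist x v). auto using gdist_spec.
Qed.

Lemma halfspace_edge h a b : halfspace adj h -> h a -> ~ h b -> adj a b ->
  forall y, h y <-> gdist y a < gdist y b.
Proof.
  intros (u & v & Huv & Hh) Ha Hb Hab. pose proof (halfspace_gdist _ _ _ Hh) as Hi.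
  rewrite Hi in Ha, Hb.
  pose proof (gdist_adj_succ _ _ a Huv). pose proof (gdist_adj_succ _ _ b Huv).
  pose proof (gdist_adj_succ _ _ u Hab). pose proof (gdist_adj_succ _ _ v Hab).
  pose proof (gdist_sym a u). pose proof (gdist_sym a v).
  pose proof (gdist_sym b u). pose proof (gdist_sym b v).
  intros y. rewrite Hi. pose proof (gdist_adj_succ _ _ y Huv). split.
  - apply (parallel_edges_side (gdist a u) u v a b); auto; lia.
  - intros Hy. destruct (le_lt_dec (gdist y v) (gdist y u)) as [Hc|Hc]; [exfalso|lia].
    assert (gdist y b < gdist y a); [|lia].
    apply (parallel_edges_side (gdist a u) v u b a); auto using adj_sym; lia.
Qed.

Lemma halfspace_edge_unique h k a b : halfspace adj h -> halfspace adj k ->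
  adj a b -> h a -> ~ h b -> k a -> ~ k b -> seteq h k.
Proof.
  intros Hh Hk Hab Ha Hb Ka Kb y.
  rewrite (halfspace_edge h a b), (halfspace_edge k a b); tauto.
Qed.

Lemma halfspace_nonempty h : halfspace adj h -> nonempty h /\ nonempty (compl h).
Proof.
  intros (u & v & Huv & Hh). pose proof (halfspace_gdist _ _ _ Hh) as Hi. split.
  - exists u. rewrite Hi, gdist_refl, gdist_adj; auto.
  - exists v. unfold compl. rewrite Hi, gdist_refl. lia.
Qed.

Lemma halfspace_chain_stabilizes x y l (f : nat -> vset V) : walk adj x y l ->
  (forall n, halfspace adj (f n)) -> (forall n, subset (f (S n)) (f n)) ->
  (forall n, f n x) -> (forall n, ~ f n y) ->
  exists N, forall n, N <= n -> seteq (f n) (f N).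
Proof.
  intros W Hh Hmono. induction W as [x|x z y l Hxz W IH]; intros Hx Hy.
  - contradiction (Hy 0 (Hx 0)).
  - destruct (classic (forall n, f n z)) as [Hz|Hz]; [exact (IH Hz Hy)|].
    apply not_all_ex_not in Hz as [N HN]. exists N. intros n Hn.
    apply (halfspace_edge_unique _ _ x z); auto.
    intros Hnz. exact (HN (chain_antitone f Hmono N n Hn z Hnz)).
Qed.

End MedianGraph.

Section HalfSpaceAlgebra.
Context {V : Type}.
Implicit Types a c h k : vset V.

Lemma hat_sub_compl a h : nonempty a -> nonempty (compl a) ->
  hat_sub a h -> ~ hat_sub a (compl h).
Proof.
  intros [x Hx] [y Hy] [[S1 T1]|[S1 T1]] [[S2 T2]|[S2 T2]].
  - exact (S2 x Hx (S1 x Hx)).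
  - apply T2. intros z Hz Hz'. exact (Hz (S1 z Hz')).
  - apply T1. intros z Hz Hz'. exact (S2 z Hz' Hz).
  - exact (S2 y Hy (S1 y Hy)).
Qed.

Lemma hat_sub_not_transverse a h k : hat_sub a h -> subset k (compl h) -> ~ transverse k a.
Proof.
  intros [[Sa _]|[Sa _]] Hk [[x [Hkx Hax]] [[y [Hky Hay]] _]].
  - exact (Hk x Hkx (Sa x Hax)).
  - exact (Hk y Hky (Sa y Hay)).
Qed.

Lemma hat_sub_mono a h k : hat_sub a h -> subset h k -> hat_sub a k.
Proof.
  intros [[Sa Na]|[Sa Na]] Hk; [left|right];
    (split; [intros x Hx; auto | intros Hka; apply Na; intros x Hx; auto]).
Qed.

Lemma transverse_mono c h k : transverse h c -> subset h k -> transverse k c \/ hat_sub c k.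
Proof.
  intros [[x1 [Hx1 Cx1]] [[x2 [Hx2 Cx2]] _]] Hk.
  destruct (classic (nonempty (fun x => compl k x /\ c x))) as [N1|N1].
  - destruct (classic (nonempty (fun x => compl k x /\ compl c x))) as [N2|N2].
    + left. repeat split; [exists x1 | exists x2 | ..]; auto.
    + right; right. split.
      * intros x Hx. apply NNPP. intro Hn. apply N2. exists x; auto.
      * intros Hs. exact (Hs x1 (Hk x1 Hx1) Cx1).
  - right; left. split.
    + intros x Hx. apply NNPP. intro Hn. apply N1. exists x; auto.
    + intros Hs. exact (Cx2 (Hs x2 (Hk x2 Hx2))).
Qed.

Lemma hat_sub_or_transverse_mono c h k : hat_sub c h \/ transverse h c -> subset h k ->
  hat_sub c k \/ transverse k c.
Proof.
  intros [Hc|Hc] Hk; [left; exact (hat_sub_mono _ _ _ Hc Hk)|].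
  destruct (transverse_mono _ _ _ Hc Hk); tauto.
Qed.

Lemma hat_sub_excludes_compl a h : nonempty a -> nonempty (compl a) ->
  hat_sub a h -> ~ (hat_sub a (compl h) \/ transverse (compl h) a).
Proof.
  intros Ha Hca Hh [Hc|Hc].
  - exact (hat_sub_compl _ _ Ha Hca Hh Hc).
  - exact (hat_sub_not_transverse _ _ _ Hh (fun x Hx => Hx) Hc).
Qed.

Lemma hat_sub_covers a h x y : a x -> compl a y -> hat_sub a h -> h x \/ h y.
Proof. intros Hx Hy [[Sa _]|[Sa _]]; auto. Qed.

Lemma chain_common_point (l : list V) : forall f : nat -> vset V,
  (forall n, subset (f (S n)) (f n)) -> (forall n, exists x, In x l /\ f n x) ->
  exists x, In x l /\ forall n, f n x.
Proof.
  induction l as [|x l IH]; intros f Hdec Hcov.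
  - destruct (Hcov 0) as [x [[] _]].
  - destruct (classic (forall n, f n x)) as [Hx|Hx]; [exists x; simpl; auto|].
    apply not_all_ex_not in Hx as [N HN].
    destruct (IH (fun n => f (N + n))) as [z [Hz Hfz]].
    + intros n. rewrite Nat.add_succ_r. apply Hdec.
    + intros n. destruct (Hcov (N + n)) as [z [[<-|Hz] Hfz]]; [|eauto].
      contradiction HN. exact (chain_antitone _ Hdec N (N + n) (Nat.le_add_r N n) _ Hfz).
    + exists z. split; [simpl; auto|]. intros n.
      exact (chain_antitone _ Hdec n (N + n) (Nat.le_add_l n N) _ (Hfz n)).
Qed.

End HalfSpaceAlgebra.

Section Beta.
Variables (V : Type) (adj : V -> V -> Prop) (h1 h2 : vset V).

Lemma beta_spec h : beta adj h1 h2 h <-> halfspace adj h /\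
  (hat_sub h1 h \/ transverse h h1) /\ (hat_sub h2 h \/ transverse h h2) /\
  (hat_sub h1 h \/ hat_sub h2 h).
Proof. unfold beta. tauto. Qed.

Lemma beta_upward h k : beta adj h1 h2 h -> halfspace adj k -> subset h k -> beta adj h1 h2 k.
Proof.
  rewrite !beta_spec. intros (_ & H1 & H2 & H12) Hk Hhk.
  repeat split; [assumption | eapply hat_sub_or_transverse_mono; eassumption ..|].
  destruct H12; [left|right]; eapply hat_sub_mono; eassumption.
Qed.

Hypotheses (HX : median_graph adj) (Hh1 : halfspace adj h1) (Hh2 : halfspace adj h2).

Lemma beta_compl h : beta adj h1 h2 h -> ~ beta adj h1 h2 (compl h).
Proof.
  rewrite !beta_spec. intros (_ & _ & _ & [Hh|Hh]) (_ & C1 & C2 & _).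
  - destruct (halfspace_nonempty _ _ HX h1 Hh1) as [N N'].
    exact (hat_sub_excludes_compl _ _ N N' Hh C1).
  - destruct (halfspace_nonempty _ _ HX h2 Hh2) as [N N'].
    exact (hat_sub_excludes_compl _ _ N N' Hh C2).
Qed.

Lemma beta_consistent : consistent adj (beta adj h1 h2).
Proof. split; [exact beta_compl | exact beta_upward]. Qed.

Lemma beta_dcc : dcc (beta adj h1 h2).
Proof.
  intros f Hf Hdec.
  destruct (halfspace_nonempty _ _ HX h1 Hh1) as [[x1 X1] [x1' X1']].
  destruct (halfspace_nonempty _ _ HX h2 Hh2) as [[x2 X2] [x2' X2']].
  destruct (chain_common_point [x1; x1'; x2; x2'] f Hdec) as [x [_ Hx]].
  { intros n. destruct (proj2 (proj2 (proj2 (proj1 (beta_spec _) (Hf n))))) as [H|H].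
    - destruct (hat_sub_covers _ _ _ _ X1 X1' H); eexists; (split; [|eassumption]); simpl; auto.
    - destruct (hat_sub_covers _ _ _ _ X2 X2' H); eexists; (split; [|eassumption]); simpl; auto. }
  destruct (halfspace_nonempty _ _ HX (f 0) (proj1 (Hf 0))) as [_ [y Hy]].
  destruct (proj1 (proj2 (proj2 HX)) x y) as [l W].
  apply (halfspace_chain_stabilizes _ _ HX x y l); auto.
  - intro n. exact (proj1 (Hf n)).
  - intros n Hny. exact (Hy (chain_antitone _ Hdec 0 n (Nat.le_0_l n) _ Hny)).
Qed.

End Beta.

Theorem lemma3 (V : Type) (adj : V -> V -> Prop)
  (HX : median_graph adj) (Hfd : finite_dimensional adj)
  (h1 h2 : vset V)
  (Hh1 : halfspace adj h1) (Hh2 : halfspace adj h2)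
  (H12 : ssubset h1 (compl h2)) :
  consistent adj (beta adj h1 h2) /\ dcc (beta adj h1 h2).
Proof.
  split; [apply beta_consistent | apply beta_dcc]; assumption.
Qed.
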